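(* For $1\le i\le j\le n$, let $v_{ij}\in\mathbb R^{\binom{n+1}{2}}$ be the vertex of $\Gamma$ that is the characteristic vector of the singleton antichain $\{b_{ij}\}$ of $\mathcal P_n$ (the standard basis vector for the coordinate $A_{ij}$), and let $\nu_{ij}$ be the hook $(n+1-i,1^{j-i})$. Then $M_n(v_{ij})=\mathrm{val}_{\text{co-rect}}(p_\lambda)$, where $\lambda$ is the complement in the $n\times n$ square of $\nu_{ij}$ placed right-justified in the bottom right corner (i.e. $\lambda$ is the square with its last $n+1-i$ boxes of the bottom row and its last $j-i+1$ boxes of the rightmost column removed).
   Context: Lagrangian Grassmannian: $X=\mathrm{LGr}(n,2n)$, the $n$-dimensional subspaces of $\mathbb C^{2n}$ Lagrangian for $\omega_{ij}=(-1)^j\delta_{i,2n+1-j}$, in its Plücker embedding; $\mathbb C[X]$ its homogeneous coordinate ring. Plücker coordinates $p_I$ ($I$ an $n$-subset of $[2n]$) are indexed by Young diagrams in the $n\times n$ square: along the lattice path from the upper right to the lower left corner with unit steps (down or left) labelled $1,\dots,2n$, $\lambda_I$ is the diagram above the path whose vertical steps are labelled by $I$; $p_{\lambda_I}=p_I$. Valuation: for $0\le a,b\le n$ let $\mu_{a,b}=(n^a,b^{n-a})$; $\mu_{a,b}^T=\mu_{b,a}$. The co-rectangles symmetric plabic graph $G=G^{\text{co-rect}}_n$ is a reduced plabic graph with boundary vertices $1,\dots,2n$ clockwise, symmetric (in Karpman's sense) with respect to a diameter $d$ with endpoints between $2n$ and $1$ and between $n$ and $n+1$, whose faces (Rietsch–Williams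 labelling, translated to Young diagrams) are exactly the $\mu_{a,b}$, reflection in $d$ exchanging faces $\mu,\mu^T$. With $O$ the unique perfect orientation with source set $\{1,\dots,n\}$, the flow polynomial $P_J$ is the sum over flows from $[n]$ to $J$ (vertex-disjoint paths from $[n]\setminus J$ to $J\setminus[n]$) of the product over paths of the face variables $x_\mu$ to the left of the path. With $x_\mu=x_{\mu^T}$, $p_J\mapsto P_J$ embeds $\mathbb C[X]$ into Laurent polynomials; $\mathrm{val}_{\text{co-rect}}(f)$ is the exponent vector of the lexicographically minimal term (for a fixed total order of variables), with coordinates indexed by transpose-orbits of nonempty face labels, so values lie in $\mathbb Z^{\binom{n+1}{2}}$. Poset and polytope: $\mathcal P_n$ is the poset on $\{b_{ij}:1\le i\le j\le n\}$ with cover relations $b_{ij}>b_{i+1,j+1}$, $b_{ij}>b_{i,j+1}$. $\Gamma\subset\mathbb R^{\binom{n+1}{2}}$, coordinates $A_{ij}$ ordered lexicographically, is defined by $A_{ij}\ge0$ and $\sum_{j=1}^nA_{i_j,j}\le1$ for every sequence $1=i_1\le\cdots\le i_n$ with $i_{j+1}-i_j\in\{0,1\}$ (the chain polytope of $\mathcal P_n$; the tropicalized Pech–Rietsch superpotential). Matrix $M_n$: for $0\le i\le j\le n-1$ let $\lambda^{(i,j)}=(n^j,(n-1)^{n-1-j},i)$. $M_n$ is the $\binom{n+1}{2}\times\binom{n+1}{2}$ matrix whose columns are $\mathrm{val}_{\text{co-rect}}(p_{\lambda^{(i,j)}})$, ordered by $(i,j)<(i',j')$ iff $i<i'$, or $i=i'$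 and $j>j'$; rows are indexed by the transpose-orbits of nonempty face labels, represented by $n$-subsets of $[2n]$, ordered so that the subset with the larger entry at the first difference (comparing largest elements, then second largest, etc.) comes first. $M_n$ acts as a linear map $\mathbb R^{\binom{n+1}{2}}\to\mathbb R^{\binom{n+1}{2}}$ with the $k$-th domain coordinate being the $k$-th $A_{ij}$ in lexicographic order. *)

From mathcomp Require Import all_boot all_order all_algebra.
Set Implicit Arguments. Unset Strict Implicit. Unset Printing Implicit Defensive.
Import GRing.Theory.
Local Open Scope ring_scope.

(* Young diagrams in the n x n square are given by their row lengths
   lam = [:: lam_1; ...; lam_n] (top row first, weakly decreasing, <= n). *)

(* Plucker index of a diagram: along the lattice path from the upper right to
   the lower left corner with steps labelled 1..2n, the vertical step of row r
   (1-indexed) has label r + (n - lam_r).  We use 0-indexed labels in 'I_(2n):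
   the subset is { r + n - lam_r : r = 0..n-1 } (r 0-indexed). *)
Definition subset_of_diagram (n : nat) (lam : seq nat) : {set 'I_(2 * n)} :=
  [set k : 'I_(2 * n) | [exists r : 'I_n, nat_of_ord k == (r + n - nth 0%N lam r)%N]].

Definition lam_ij (n i j : nat) : seq nat :=
  nseq j n ++ nseq (n - 1 - j) n.-1 ++ [:: i].

Definition hook (n i j : nat) : seq nat := (n + 1 - i)%N :: nseq (j - i) 1%N.

(* Complement in the n x n square of a diagram nu placed right-justified in
   the bottom right corner (rotated by 180 degrees): row r (0-indexed from the
   top) has length n - nu_{n-r} (nu 1-indexed, nu_k = 0 beyond its length). *)
Definition sq_complement (n : nat) (nu : seq nat) : seq nat :=
  mkseq (fun r => n - nth 0%N nu (n - 1 - r))%N n.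

Definition Nn (n : nat) : nat := 'C(n.+1, 2).

Definition lex_pairs (n : nat) : seq (nat * nat) :=
  [seq (i, j) | i <- iota 1 n, j <- iota i (n.+1 - i)].

Definition col_pairs (n : nat) : seq (nat * nat) :=
  [seq (i, j) | i <- iota 0 n, j <- rev (iota i (n - i))].

(* A valuation val : n-subsets of [2n] -> Z^{binom(n+1,2)}, rows already in the
   order of the paper.  M_n has columns val(p_{lambda^{(i,j)}}). *)
Definition Mmat (n : nat) (val : {set 'I_(2 * n)} -> 'cV[int]_(Nn n)) :
  'M[int]_(Nn n) :=
  \matrix_(r, c) val (subset_of_diagram n
                        (let ij := nth (0, 0)%N (col_pairs n) c in lam_ij n ij.1 ij.2)) r 0.

(* v_ij: characteristic vector of the antichain {b_ij}, i.e. the standard basis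
   vector of the coordinate A_ij. *)
Definition vchar (n i j : nat) : 'cV[int]_(Nn n) :=
  \col_k ((nth (0, 0)%N (lex_pairs n) k == (i, j))%:R).

Arguments Mmat n val : clear implicits.
Arguments subset_of_diagram n lam : clear implicits.

(* M_n v_ij is the column of M_n sitting at the position k of A_ij in the
   lexicographic order of coordinates.  The k-th column pair in the order
   "i increasing, then j decreasing" is (i-1, n-1-(j-i)), and the diagram
   lambda^(i-1, n-1-(j-i)) = (n^(n-1-(j-i)), (n-1)^(j-i), i-1) is exactly the
   square with the rotated hook nu_ij removed.  No property of the valuation
   is needed. *)

From mathcomp Require Import all_boot all_order all_algebra.
From mathcomp Require Import zify.

Set Implicit Arguments.
Unset Strict Implicit.
Unset Printing Implicit Defensive.

Lemma size_lex_pairs n : size (lex_pairs n) = Nn n.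
Proof.
rewrite size_allpairs_dep sumnE big_map /Nn -bin2_sum big_ltn // add0n.
under eq_bigr do rewrite size_iota.
have -> : iota 1 n = index_iota 1 n.+1 by rewrite /index_iota subn1.
rewrite big_nat_rev /=.
by apply: eq_big_nat => i /andP[_ ltin]; rewrite add1n; lia.
Qed.

Lemma lex_pairs_uniq n : uniq (lex_pairs n).
Proof.
apply: allpairs_uniq_dep => [|x _|[a b] [c d] _ _ /= [-> ->]] //; exact: iota_uniq.
Qed.

Lemma mem_lex_pairs n i j : ((i, j) \in lex_pairs n) = (0 < i <= j) && (j <= n).
Proof.
apply/allpairsPdep/idP => [[a [b [/[!mem_iota] ha hb [-> ->]]]]|hij]; first lia.
by exists i, j; rewrite !mem_iota; split => //; lia.
Qed.

Local Open Scope ring_scope.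

Lemma col_nth_indicator (R : pzSemiRingType) (T : eqType) m (s : seq T) x0
    (k : 'I_m) :
  uniq s -> size s = m ->
  \col_(l < m) ((nth x0 s l == nth x0 s k)%:R : R) = delta_mx k 0.
Proof.
move=> s_uniq size_s; apply/matrixP => l c; rewrite !mxE (ord1 c) eqxx andbT.
by rewrite nth_uniq ?size_s.
Qed.

Lemma col_pairs_lex n :
  col_pairs n = [seq (p.1.-1, (n.-1 - (p.2 - p.1))%N) | p <- lex_pairs n].
Proof.
rewrite /col_pairs /lex_pairs map_allpairs.
have -> : iota 1 n = map (addn 1) (iota 0 n) by rewrite -iotaDl.
rewrite allpairs_mapl.
congr flatten; apply/eq_in_map => i /[!mem_iota] /= lt_in.
apply: (@eq_from_nth _ (0, 0)%N) => [|k]; first by rewrite !size_map size_rev !size_iota; lia.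
rewrite size_map size_rev size_iota => ltk.
rewrite (nth_map 0%N) ?size_rev ?size_iota // nth_rev ?size_iota //.
by rewrite (nth_map 0%N) ?size_iota ?nth_iota //=; [congr pair|]; lia.
Qed.

Lemma lam_ij_hook n i j : (0 < i <= j)%N -> (j <= n)%N ->
  lam_ij n i.-1 (n.-1 - (j - i)) = sq_complement n (hook n i j).
Proof.
move=> /andP[lt0i leij] lejn.
apply: (@eq_from_nth _ 0%N) => [|k].
  by rewrite size_mkseq !size_cat !size_nseq /=; lia.
rewrite !size_cat !size_nseq /= => ltk.
rewrite nth_mkseq; last lia.
rewrite /hook !nth_cat !size_nseq.
case e: (n - 1 - k)%N => [|m]; rewrite /= -[[:: i.-1]]/(nseq 1 i.-1) !nth_nseq.
all: do ![case: ifP => ?]; lia.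
Qed.

Lemma col_Mmat n val (k : 'I_(Nn n)) :
  col k (Mmat n val) =
  val (subset_of_diagram n
         (let ij := nth (0, 0)%N (col_pairs n) k in lam_ij n ij.1 ij.2)).
Proof. by apply/matrixP => r c; rewrite !mxE (ord1 c). Qed.

Theorem mainTheorem8 (n : nat)
  (val : {set 'I_(2 * n)} -> 'cV[int]_(Nn n))
  (i j : nat) (hij : (1 <= i <= j)%N /\ (j <= n)%N) :
  Mmat n val *m vchar n i j =
  val (subset_of_diagram n (sq_complement n (hook n i j))).
Proof.
case: hij => hij hjn.
have ij_lex : (i, j) \in lex_pairs n by rewrite mem_lex_pairs hij.
have ltk : (index (i, j) (lex_pairs n) < Nn n)%N by rewrite -size_lex_pairs index_mem.
set k := Ordinal ltk.
have -> : vchar n i j = delta_mx k 0.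
  rewrite -(col_nth_indicator _ (0, 0)%N k (lex_pairs_uniq n) (size_lex_pairs n)).
  by rewrite /= nth_index.
rewrite -colE col_Mmat col_pairs_lex (nth_map (0, 0)%N) ?size_lex_pairs //.
by rewrite nth_index //= lam_ij_hook.
Qed.
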